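(* Fix integers $m \ge 1$ and $n_1,\dots,n_m \ge 2$, and consider the $m$-dimensional single parity-check product code of dimension $k = \prod_{\ell=1}^m (n_\ell-1)$, transmitted over the binary erasure channel with erasure probability $\epsilon \in [0,1]$ and decoded with Elias' decoder (see context). Let $P_{\mathrm{E}}$ denote the resulting block error probability. Define $\epsilon_0 = \epsilon$ and \[ \epsilon_\ell = \epsilon_{\ell-1}\left(1-(1-\epsilon_{\ell-1})^{n_\ell-1}\right) \quad \text{for } \ell = 1,\dots,m, \] and set $q_{\max} = \epsilon_m$. Then \[ q_{\max} \le P_{\mathrm{E}} \le k\, q_{\max}. \]
   Context: Index set and code. Let $A = \{1,\dots,n_1\}\times\cdots\times\{1,\dots,n_m\}$. The single parity-check product code is the set of binary arrays $x: A \to \{0,1\}$ in which every line in every direction $\ell$ has even weight; a line in direction $\ell$ is obtained by fixing all coordinates except the $\ell$-th. The information positions are $A_{\mathrm{info}} = \{a : a_\ell \le n_\ell-1 \text{ for all } \ell\}$, and a codeword is determined by its entries there. Channel. Each entry is independently erased with probability $\epsilon$ and otherwise received correctly. Notation. For $\ell = 0,\dots,m$ let $A_\ell = \{a \in A : a_i \le n_i-1 \text{ for } i \le \ell\}$. For $a \in A$ and $b \in \{1,\dots,n_\ell\}$, let $a[\ell\leftarrow b]$ denote $a$ with its $\ell$-th coordinate replaced by $b$. Elias' decoder. This decoder processes dimensions $1$ to $m$ in one sweep, applying local SPC decoding to each line. $E_0(a)$ is true iff entry $a$ is not erased. For $\ell \ge 1$ and $a \in A_\ell$, $E_\ell(a)$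 is true iff $E_{\ell-1}(a)$ is true, or $E_{\ell-1}(a[\ell\leftarrow b])$ is true for every $b \ne a_\ell$ with $1 \le b \le n_\ell$. The information bit at $a$ is recovered iff $E_m(a)$ is true, and erased otherwise; the decoder never makes a wrong decision. A block error occurs iff some $a \in A_{\mathrm{info}}$ has $E_m(a)$ false, and $P_{\mathrm{E}}$ is the probability of this event. *)

From HB Require Import structures.
From mathcomp Require Import all_boot all_order all_algebra.
Set Implicit Arguments. Unset Strict Implicit. Unset Printing Implicit Defensive.
Import Order.TTheory GRing.Theory Num.Theory.

(* Dimensions are indexed 0..m-1 (dimension l+1 of the paper is index l);
   coordinates are 0-based: coordinate l ranges over 0..n l - 1.
   Only n 0, ..., n (m-1) are relevant. *)

Definition bnd (m : nat) (n : nat -> nat) : nat := \max_(l < m) n l.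

(* Ambient finite type of coordinate vectors; the index set A is a subset. *)
Definition pos (m : nat) (n : nat -> nat) := {ffun 'I_m -> 'I_(bnd m n)}.

Definition Aset m n : {set pos m n} := [set a : pos m n | [forall l : 'I_m, a l < n l]].

(* Information positions: a_l <= n_l - 2 (0-based), i.e. all but the last value. *)
Definition Ainfo m n : {set pos m n} :=
  [set a in Aset m n | [forall l : 'I_m, a l < (n l).-1]].

Definition upd m n (a : pos m n) (l : 'I_m) (b : 'I_(bnd m n)) : pos m n :=
  [ffun j => if j == l then b else a j].

(* Elias' decoder: Edec S l a is E_l(a), where S is the set of erased entries.
   E_{l+1}(a) = E_l(a) || forall b in line (b <> a_l), E_l(a[l <- b]). *)
Fixpoint Edec m n (S : {set pos m n}) (l : nat) (a : pos m n) : bool :=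
  match l with
  | 0 => a \notin S
  | l'.+1 =>
      Edec S l' a ||
      match (insub l' : option 'I_m) with
      | Some i => [forall b : 'I_(bnd m n),
                     ((b < n l') && (b != a i)) ==> Edec S l' (upd a i b)]
      | None => false
      end
  end.

Definition block_error m n (S : {set pos m n}) : bool :=
  [exists a in Ainfo m n, ~~ Edec S m a].

(* Block error probability over the BEC(eps): each entry of A is erased
   independently with probability eps; S ranges over erasure patterns. *)
Definition PE (R : ringType) m n (eps : R) : R :=
  \sum_(S : {set pos m n} | S \subset Aset m n)
     eps ^+ #|S| * (1 - eps) ^+ (#|Aset m n| - #|S|) * (block_error S)%:R.

Fixpoint eps_seq (R : ringType) (n : nat -> nat) (eps : R) (l : nat) : R :=
  match l with
  | 0 => eps
  | l'.+1 => let e := eps_seq n eps l' in e * (1 - (1 - e) ^+ (n l' - 1))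
  end.

Definition code_dim m (n : nat -> nat) : nat := \prod_(l < m) (n l - 1).

From HB Require Import structures.
From mathcomp Require Import all_boot all_order all_algebra.
Import Order.TTheory GRing.Theory Num.Theory.
Set Implicit Arguments. Unset Strict Implicit. Unset Printing Implicit Defensive.
Local Open Scope ring_scope.

(* Whether E_l(a) holds depends only on the erasures at the positions that
   agree with a in the coordinates >= l.  For the values b of coordinate l
   these regions are disjoint hyperplanes, so the events E_l(a[l <- b]) are
   independent, and by induction each fails with probability eps_l.  Hence
   E_{l+1}(a) fails with probability exactly
   eps_l (1 - (1 - eps_l)^(n_l - 1)) = eps_{l+1}, for every a in A.  A block
   error means that E_m fails at some information position: one position gives
   the lower bound and the union bound over the k of them the upper bound. *)

Section Measure.
Variables (R : comNzRingType) (T : finType) (p : T -> R).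

Definition mass (S : {set T}) : R := \prod_u (if u \in S then p u else 1 - p u).
Definition expect (f : {set T} -> R) : R := \sum_(S : {set T}) mass S * f S.

Lemma sum_mass : \sum_(S : {set T}) mass S = 1.
Proof. by rewrite -bigA_distr big1 // => u _ /=; rewrite subrKC. Qed.

Lemma expect1 : expect (fun _ => 1) = 1.
Proof. by rewrite -[RHS]sum_mass; apply: eq_bigr => S _; rewrite mulr1. Qed.

Lemma expect_mem a : expect (fun S => (a \in S)%:R) = p a.
Proof.
rewrite /expect (eq_bigr (fun S : {set T} => \prod_u
    (if u \in S then p u else if u == a then 0 else 1 - p u))); last first.
  move=> S _; rewrite /mass (bigD1 a) //= [RHS](bigD1 a) //= eqxx.
  case: (a \in S); rewrite ?mulr1 ?mulr0 ?mul0r //; congr (_ * _).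
  by apply: eq_bigr => u /negbTE ->.
rewrite -bigA_distr (bigD1 a) //= eqxx addr0 big1 ?mulr1 // => u /negbTE ->.
by rewrite subrKC.
Qed.

Lemma eq_expect f g : f =1 g -> expect f = expect g.
Proof. by move=> fg; apply: eq_bigr => S _; rewrite fg. Qed.

Lemma expectB f g : expect (fun S => f S - g S) = expect f - expect g.
Proof. by rewrite /expect -sumrB; apply: eq_bigr => S _; rewrite mulrBr. Qed.

Lemma expect_sum (I : finType) (P : pred I) (F : I -> {set T} -> R) :
  expect (fun S => \sum_(i | P i) F i S) = \sum_(i | P i) expect (F i).
Proof.
by rewrite /expect; under eq_bigr do rewrite mulr_sumr; exact: exchange_big.
Qed.

Section Independence.
Variable V : {set T}.

Definition swap_on (AB : {set T} * {set T}) : {set T} * {set T} :=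
  ((AB.1 :&: V) :|: (AB.2 :&: ~: V), (AB.2 :&: V) :|: (AB.1 :&: ~: V)).

Lemma swap_onK : involutive swap_on.
Proof.
move=> [A B]; congr pair; apply/setP => x; rewrite !inE.
all: by case: (x \in V); case: (x \in A); case: (x \in B).
Qed.

Lemma mass_swap_on AB :
  mass (swap_on AB).1 * mass (swap_on AB).2 = mass AB.1 * mass AB.2.
Proof.
rewrite -!big_split; apply: eq_bigr => u _; rewrite !inE.
by case: (u \in V); case: (u \in AB.1); case: (u \in AB.2); rewrite //= mulrC.
Qed.

(* Exchanging the parts of two independent samples A, B outside V preserves
   their joint law and turns f A * g A * mass B into f A * g B. *)
Lemma expectM_indep f g :
    (forall S, f S = f (S :&: V)) -> (forall S, g S = g (S :&: ~: V)) ->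
  expect (fun S => f S * g S) = expect f * expect g.
Proof.
move=> fV gVc; rewrite mulr_suml.
under [RHS]eq_bigr do rewrite mulr_sumr.
rewrite pair_bigA (reindex_inj (inv_inj swap_onK)) /=.
transitivity (\sum_(A : {set T}) \sum_(B : {set T}) mass A * f A * g A * mass B).
  by apply: eq_bigr => A _; rewrite -mulr_sumr sum_mass mulr1 mulrA.
rewrite pair_bigA; apply: eq_bigr => -[A B] _ /=.
have f_swap : f ((A :&: V) :|: (B :&: ~: V)) = f A.
  rewrite fV [RHS]fV; congr f; apply/setP => x; rewrite !inE.
  by case: (x \in V); case: (x \in A); case: (x \in B).
have g_swap : g ((B :&: V) :|: (A :&: ~: V)) = g A.
  rewrite gVc [RHS]gVc; congr g; apply/setP => x; rewrite !inE.
  by case: (x \in V); case: (x \in A); case: (x \in B).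
rewrite f_swap g_swap mulrACA (mass_swap_on (A, B)) /=.
by rewrite -!mulrA; congr (_ * _); rewrite [RHS]mulrC -mulrA.
Qed.

End Independence.

Lemma expect_prod_indep (I : eqType) (r : seq I) (V : I -> {set T})
    (F : I -> {set T} -> R) :
    uniq r -> {in r &, forall i j, i != j -> [disjoint V i & V j]} ->
    (forall i S, F i S = F i (S :&: V i)) ->
  expect (fun S => \prod_(i <- r) F i S) = \prod_(i <- r) expect (F i).
Proof.
move=> + + FV; elim: r => [|i r IHr] /=.
  by move=> _ _; under eq_expect do rewrite big_nil; rewrite big_nil expect1.
case/andP=> ir ur disjV.
have disj_r : {in r &, forall j k, j != k -> [disjoint V j & V k]}.
  by move=> j k jr kr; apply: disjV; rewrite inE ?jr ?kr orbT.
under eq_expect do rewrite big_cons.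
rewrite big_cons (@expectM_indep (V i)) ?IHr // => S.
apply: eq_big_seq => j jr; rewrite FV [RHS]FV; congr F; apply/setP => x.
have ij : i != j by apply: contraNneq ir => ->.
have jir : j \in i :: r by rewrite inE jr orbT.
have /disjoint_setI0/setP/(_ x) := disjV i j (mem_head i r) jir ij.
rewrite !inE.
by case: (x \in V i); case: (x \in V j); case: (x \in S).
Qed.

End Measure.

Section PositiveMeasure.
Variables (R : numDomainType) (T : finType) (p : T -> R).
Hypothesis p01 : forall u, 0 <= p u <= 1.

Lemma mass_ge0 S : 0 <= mass p S.
Proof.
apply: prodr_ge0 => u _; have /andP[p0 p1] := p01 u.
by case: (u \in S); rewrite ?subr_ge0.
Qed.

Lemma ler_expect f g : (forall S, f S <= g S) -> expect p f <= expect p g.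
Proof. by move=> fg; apply: ler_sum => S _; rewrite ler_wpM2l ?mass_ge0. Qed.

End PositiveMeasure.

Section ErasureOn.
Variables (R : comNzRingType) (T : finType) (A : {set T}) (e : R).

Definition erasure_on (u : T) : R := if u \in A then e else 0.

Lemma expect_erasure_on f : expect erasure_on f =
  \sum_(S : {set T} | S \subset A) e ^+ #|S| * (1 - e) ^+ (#|A| - #|S|) * f S.
Proof.
rewrite /expect (bigID (fun S : {set T} => S \subset A)) /=.
rewrite [X in _ + X]big1 ?addr0 => [|S /subsetPn[u uS uA]]; last first.
  by rewrite /mass (bigD1 u) //= uS /erasure_on (negbTE uA) !mul0r.
apply: eq_bigr => S SA; congr (_ * _).
rewrite /mass (bigID (mem S)) /= [X in _ * X](bigID (mem A)) /=.
rewrite [X in _ * (_ * X)]big1 ?mulr1 => [|u /andP[/negbTE -> /negbTE uA]];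
  last first.
  by rewrite /erasure_on uA subr0.
rewrite (eq_bigr (fun _ => e)) => [|u uS]; last first.
  by rewrite uS /erasure_on (subsetP SA).
rewrite [X in _ * X](eq_bigl (mem (A :\: S))) => [|u]; last by rewrite !inE.
rewrite [X in _ * X](eq_bigr (fun _ => 1 - e)) => [|u]; last first.
  by move=> /setDP[uA /negbTE uS]; rewrite uS /erasure_on uA.
by rewrite !prodr_const cardsD (setIidPr SA).
Qed.

End ErasureOn.

Lemma card_ord_lt N K : (K <= N)%N -> #|[pred b : 'I_N | (b < K)%N]| = K.
Proof.
move=> KN; rewrite -sum1_card (eq_bigl (fun b : 'I_N => (b < K)%N)) //.
by rewrite -(big_ord_widen _ (fun _ => 1%N)) // sum1_card card_ord.
Qed.

Lemma prod_natr_bool (R : comPzSemiRingType) (I : finType) (A : {pred I})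
    (P : pred I) :
  \prod_(i in A) (P i)%:R = [forall i in A, P i]%:R :> R.
Proof.
case: (boolP [forall i in A, P i]) => [/forall_inP allP|].
  by rewrite big1 // => i /allP ->.
case/forall_inPn => i iA /negbTE nPi.
by rewrite (bigD1 i) //= nPi mul0r.
Qed.

Section Decoder.
Variables (m : nat) (n : nat -> nat).
Local Notation P := (pos m n).

Lemma leq_bnd (l : 'I_m) : (n l <= bnd m n)%N.
Proof. exact: (@bigop.leq_bigmax _ (fun l : 'I_m => n l)). Qed.

Lemma card_Ainfo : #|Ainfo m n| = code_dim m n.
Proof.
pose Q (l : 'I_m) (b : 'I_(bnd m n)) := (b < (n l).-1)%N.
rewrite (@eq_card _ _ (family Q)) => [|a]; last first.
  rewrite !inE; apply/andP/familyP => [[_ /forallP aQ] //|aQ].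
  split; apply/forallP => l; have := aQ l; rewrite unfold_in //.
  by move/leq_trans; apply; exact: leq_pred.
rewrite card_family foldrE big_map big_enum; apply: eq_bigr => l _.
by rewrite subn1 card_ord_lt // (leq_trans (leq_pred _)) ?leq_bnd.
Qed.

Definition coord_range (i : 'I_m) : {set 'I_(bnd m n)} :=
  [set b : 'I_(bnd m n) | (b < n i)%N].

Definition hyperplane (i : 'I_m) (b : 'I_(bnd m n)) : {set P} :=
  [set x : P | x i == b].

Lemma card_coord_range i : #|coord_range i| = n i.
Proof. by rewrite -(card_ord_lt (leq_bnd i)); apply: eq_card => b; rewrite inE. Qed.

Lemma upd_Aset (a : P) (i : 'I_m) b :
  a \in Aset m n -> b \in coord_range i -> upd a i b \in Aset m n.
Proof.
rewrite !inE => /forallP aA bi; apply/forallP => j; rewrite ffunE.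
by case: eqP => [->|_] //; exact: aA.
Qed.

Lemma Edec_local (S S' : {set P}) l (a : P) :
    (forall x : P, (forall j : 'I_m, (l <= j)%N -> x j = a j) ->
       (x \in S) = (x \in S')) ->
  Edec S l a = Edec S' l a.
Proof.
elim: l a => [|l IHl] a SS' /=; first by rewrite SS'.
rewrite (IHl a) => [|x xa]; last by apply: SS' => j /ltnW; exact: xa.
congr orb; case: insubP => [i _ il|_] //.
apply: eq_forallb => b; congr implb; apply: IHl => x xa; apply: SS' => j lj.
rewrite xa ?(ltnW lj) // ffunE; case: eqP => // ji.
by move: lj; rewrite ji il ltnn.
Qed.

Lemma Edec_restrict (S V : {set P}) (a : P) (i : 'I_m) :
  hyperplane i (a i) \subset V -> Edec S i a = Edec (S :&: V) i a.
Proof.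
move=> /subsetP aV; apply: Edec_local => x xa.
by rewrite inE aV ?andbT // inE xa.
Qed.

Lemma Edec_succ (S : {set P}) (a : P) (i : 'I_m) : Edec S i.+1 a =
  Edec S i a || [forall b in coord_range i :\ a i, Edec S i (upd a i b)].
Proof. by rewrite /= valK; congr orb; apply: eq_forallb => b; rewrite !inE andbC. Qed.

Lemma not_Edec_succ (R : comPzRingType) (S : {set P}) (a : P) (i : 'I_m) :
  (~~ Edec S i.+1 a)%:R = (~~ Edec S i a)%:R *
     (1 - \prod_(b in coord_range i :\ a i) (Edec S i (upd a i b))%:R) :> R.
Proof.
rewrite Edec_succ prod_natr_bool.
by case: (Edec S i a); case: [forall _ in _, _];
  rewrite /= ?mul0r ?subrr ?subr0 ?mulr0 ?mulr1.
Qed.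

Section ErasureProbability.
Variables (R : comNzRingType) (eps : R).
Local Notation E := (expect (erasure_on (Aset m n) eps)).

Lemma expect_Edec_line (a : P) i :
    (forall b, b \in coord_range i ->
       E (fun S => (~~ Edec S i (upd a i b))%:R) = eps_seq n eps i) ->
  E (fun S => \prod_(b in coord_range i :\ a i) (Edec S i (upd a i b))%:R) =
  (1 - eps_seq n eps i) ^+ #|coord_range i :\ a i|.
Proof.
move=> not_Edec_line.
under eq_expect do rewrite -big_enum.
rewrite (@expect_prod_indep _ _ _ _ _ (hyperplane i)); last 3 first.
- exact: enum_uniq.
- move=> b c _ _ bc; rewrite -setI_eq0; apply/eqP/setP => x; rewrite !inE.
  by apply: contraNF bc => /andP[/eqP <- /eqP <-].
- by move=> b S; rewrite (@Edec_restrict _ (hyperplane i b)) // ffunE eqxx.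
rewrite big_enum -prodr_const; apply: eq_bigr => b /setD1P[_ bi].
have Edec_neg S :
    (Edec S i (upd a i b))%:R = 1 - (~~ Edec S i (upd a i b))%:R :> R.
  by case: Edec; rewrite ?subr0 ?subrr.
by under eq_expect do rewrite Edec_neg; rewrite expectB expect1 not_Edec_line.
Qed.

Lemma expect_not_Edec l (a : P) : (l <= m)%N -> a \in Aset m n ->
  E (fun S => (~~ Edec S l a)%:R) = eps_seq n eps l.
Proof.
elim: l a => [|l IHl] a lm aA.
  by under eq_expect do rewrite negbK; rewrite expect_mem /erasure_on aA.
pose i := Ordinal lm.
have ai : a i \in coord_range i by move: aA; rewrite !inE => /forallP.
have IHi b : b \in coord_range i ->
    E (fun S => (~~ Edec S i (upd a i b))%:R) = eps_seq n eps l.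
  by move=> bi; apply: IHl (ltnW lm) (upd_Aset aA bi).
under eq_expect do rewrite (not_Edec_succ _ _ _ i) mulrBr mulr1.
rewrite expectB (@expectM_indep _ _ _ (hyperplane i (a i))); first last.
- move=> S; apply: eq_bigr => b /setD1P[bai _].
  rewrite (@Edec_restrict _ (~: hyperplane i (a i))) //.
  by apply/subsetP => x; rewrite !inE ffunE eqxx => /eqP ->.
- by move=> S; rewrite (@Edec_restrict _ (hyperplane i (a i))).
rewrite IHl ?(ltnW lm) // expect_Edec_line //.
have -> : #|coord_range i :\ a i| = (n l - 1)%N.
  by rewrite -(card_coord_range i) (cardsD1 (a i) (coord_range i)) ai add1n subn1.
by rewrite /= mulrBr mulr1.
Qed.

Lemma PE_expect : PE m n eps = E (fun S => (block_error S)%:R).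
Proof. by rewrite expect_erasure_on. Qed.

End ErasureProbability.

Lemma not_Edec_le_block_error (R : numDomainType) S (a : P) :
  a \in Ainfo m n -> (~~ Edec S m a)%:R <= (block_error S)%:R :> R.
Proof.
move=> aI; rewrite ler_nat; case: (boolP (Edec S m a)) => //= nE.
by have -> : block_error S by apply/existsP; exists a; rewrite aI nE.
Qed.

Lemma block_error_le_sum (R : numDomainType) S :
  (block_error S)%:R <= \sum_(a in Ainfo m n) (~~ Edec S m a)%:R :> R.
Proof.
case: (boolP (block_error S)) => [/existsP[a /andP[aI nE]]|_].
  by rewrite (bigD1 a) //= nE lerDl sumr_ge0.
exact: sumr_ge0.
Qed.

End Decoder.

Theorem theorem1 (R : realFieldType) (m : nat) (n : nat -> nat) (eps : R) :
  (1 <= m)%N ->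
  (forall l : nat, (l < m)%N -> (2 <= n l)%N) ->
  0 <= eps <= 1 ->
  eps_seq n eps m <= PE m n eps /\ PE m n eps <= (code_dim m n)%:R * eps_seq n eps m.
Proof.
move=> _ n_ge2 eps01.
have erasure01 u : 0 <= erasure_on (Aset m n) eps u <= 1.
  by rewrite /erasure_on; case: ifP; rewrite ?lexx ?ler01.
have AinfoA a : a \in Ainfo m n -> a \in Aset m n by rewrite inE => /andP[].
have [a aI] : exists a, a \in Ainfo m n.
  apply/card_gt0P; rewrite card_Ainfo prodn_gt0 // => l.
  by rewrite subn_gt0 n_ge2.
rewrite PE_expect; split.
  rewrite -(expect_not_Edec _ (leqnn m) (AinfoA a aI)).
  by apply: (ler_expect erasure01) => S; exact: not_Edec_le_block_error.
apply: le_trans (ler_expect erasure01 (@block_error_le_sum _ _ R)) _.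
rewrite expect_sum (eq_bigr (fun _ => eps_seq n eps m)) => [|b bI]; last first.
  exact: expect_not_Edec (leqnn m) (AinfoA b bI).
by rewrite sumr_const card_Ainfo mulr_natl.
Qed.
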